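(* Let $(X,S)$ be a faithful transformation semigroup such that $(X,S)$ divides $(S^\bullet,S)$. Then $\llbracket S\cup\overline X\rrbracket=\llbracket S^{\mathsf{bar}}\rrbracket$. In particular, if $S$ is any finite semigroup and $J$ is a right ideal of $S$ on which $S$ acts faithfully by right multiplication, then $\llbracket S^{\mathsf{bar}}\rrbracket=\llbracket S\cup\overline J\rrbracket$.
   Context: All semigroups and sets are finite. A transformation semigroup $(X,S)$ is a semigroup $S$ acting faithfully on the right of a set $X$; $\overline X$ denotes the set of constant maps on $X$, and $S\cup\overline X$ is the transformation semigroup on $X$ generated by (equal to) $S$ together with these constant maps. Division of transformation semigroups is in Eilenberg's sense: $(X,S)$ divides $(Y,T)$ if there is a surjective partial map $\varphi$ from $Y$ onto $X$ such that for every $s\in S$ there is $t\in T$ with $(y\varphi)s=(yt)\varphi$ for all $y$ in the domain of $\varphi$ (and $yt$ in the domain of $\varphi$). For a semigroup $S$, $S^\bullet=S$ if $S$ is a monoid and $S^\bullet=S^I$ (external identity adjoined) otherwise; $(S^\bullet,S)$ is the action by right multiplication, and $S^{\mathsf{bar}}$ is the transformation semigroup on $S^\bullet$ consisting of these right multiplications together with all constant maps on $S^\bullet$. $\llbracket S\rrbracket$ is the pseudovariety generated by $S$. *)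

From mathcomp Require Import all_boot.
Set Implicit Arguments. Unset Strict Implicit. Unset Printing Implicit Defensive.

(* Transformations act on the RIGHT: x (f g) = (x f) g, so the product of
   transformations f, g is "first f then g". *)
Definition tmul (Y : finType) (f g : {ffun Y -> Y}) : {ffun Y -> Y} :=
  [ffun y => g (f y)].

(* Transformations of D are encoded as maps on Y that are the identity
   outside of D. *)
Definition bar_ts (Y S : finType) (D : {set Y}) (gen : Y -> S -> Y)
  : {set {ffun Y -> Y}} :=
  [set [ffun y => if y \in D then gen y s else y] | s : S]
  :|: [set [ffun y => if y \in D then c else y] | c in D].

Definition power (T : finType) (A : {set T}) (n : nat)
  : {set {ffun 'I_n -> T}} := [set f : {ffun 'I_n -> T} | [forall i, f i \in A]].
Definition pmul (T : finType) (mT : T -> T -> T) (n : nat)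
  (f g : {ffun 'I_n -> T}) : {ffun 'I_n -> T} := [ffun i => mT (f i) (g i)].

Definition sdivides (W : finType) (mW : W -> W -> W)
  (U : finType) (mU : U -> U -> U) (B : {set U}) : Prop :=
  exists (C : {set U}) (phi : U -> W),
    [/\ C \subset B,
        {in C &, forall x y, mU x y \in C},
        {in C &, forall x y, phi (mU x y) = mW (phi x) (phi y)} &
        forall w, exists2 x, x \in C & phi x = w].

(* W belongs to the pseudovariety generated by B: W divides a finite power of B *)
Definition in_pv (W : finType) (mW : W -> W -> W)
  (U : finType) (mU : U -> U -> U) (B : {set U}) : Prop :=
  exists n : nat, sdivides mW (@pmul U mU n) (power B n).

Definition same_pv (U1 : finType) (m1 : U1 -> U1 -> U1) (B1 : {set U1})
  (U2 : finType) (m2 : U2 -> U2 -> U2) (B2 : {set U2}) : Prop :=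
  forall (W : finType) (mW : W -> W -> W), associative mW ->
    (in_pv mW m1 B1 <-> in_pv mW m2 B2).

Definition is_monoid (S : finType) (mul : S -> S -> S) : bool :=
  [exists e : S, [forall s : S, (mul e s == s) && (mul s e == s)]].

(* S^bullet, inside option S: None plays the role of the adjoined identity I *)
Definition Sdot (S : finType) (mul : S -> S -> S) : {set option S} :=
  if is_monoid mul then [set Some s | s : S] else setT.

Definition rmul_dot (S : finType) (mul : S -> S -> S) (y : option S) (s : S)
  : option S :=
  Some (match y with Some z => mul z s | None => s end).

Definition S_bar (S : finType) (mul : S -> S -> S) : {set {ffun option S -> option S}} :=
  bar_ts (Sdot mul) (@rmul_dot S mul).

Definition right_action (X S : finType) (mul : S -> S -> S) (act : X -> S -> X) :=
  forall x s t, act x (mul s t) = act (act x s) t.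

Definition faithful_act (X S : finType) (act : X -> S -> X) :=
  forall s t, (forall x, act x s = act x t) -> s = t.

(* Eilenberg division (X,S) | (S^bullet, S): phi is a surjective partial map
   from S^bullet onto X (None = undefined). *)
Definition divides_dot (X S : finType) (mul : S -> S -> S) (act : X -> S -> X) :=
  exists phi : option S -> option X,
    [/\ forall y x, phi y = Some x -> y \in Sdot mul,
        forall x, exists2 y, y \in Sdot mul & phi y = Some x &
        forall s, exists t : S, forall y x,
          phi y = Some x -> phi (rmul_dot mul y t) = Some (act x s)].

From mathcomp Require Import all_boot.
Set Implicit Arguments. Unset Strict Implicit. Unset Printing Implicit Defensive.

(* The division (X,S) | (S^bullet,S) extends to constant maps: a constant c
   of X is covered by a constant with value in the preimage of c, so
   S u Xbar divides S^bar. Conversely, since S acts faithfully on X, the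
   trace y |-> (x y)_(x in X) embeds S^bullet into X^|X|, and S^bar is
   simulated coordinatewise in the direct power (S u Xbar)^|X|: a right
   multiplication by s acts as s in every coordinate, a constant map as the
   tuple of constants given by the trace of its value. Each of the two
   semigroups thus divides a power of the other. For a right ideal J, the
   division (J,S) | (S^bullet,S) is the inclusion of J into S^bullet. *)

Definition sdivides_on (U1 : finType) (m1 : U1 -> U1 -> U1) (B1 : {set U1})
  (U2 : finType) (m2 : U2 -> U2 -> U2) (B2 : {set U2}) : Prop :=
  exists (C : {set U2}) (phi : U2 -> U1),
    [/\ C \subset B2, {in C &, forall x y, m2 x y \in C},
        {in C &, {morph phi : x y / m2 x y >-> m1 x y}} & B1 \subset phi @: C].

Lemma sdividesE (W : finType) (mW : W -> W -> W)
  (U : finType) (mU : U -> U -> U) (B : {set U}) :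
  sdivides mW mU B <-> sdivides_on mW setT mU B.
Proof.
split=> -[C [phi [sCB cC hC sur]]]; exists C, phi; split=> //.
  by apply/subsetP=> w _; have [x xC <-] := sur w; apply: imset_f.
by move=> w; have /imsetP[x xC ->] := subsetP sur w (in_setT w); exists x.
Qed.

Section Division.

Variables (U1 U2 U3 : finType) (m1 : U1 -> U1 -> U1) (m2 : U2 -> U2 -> U2).
Variables (m3 : U3 -> U3 -> U3) (B1 : {set U1}) (B2 : {set U2}) (B3 : {set U3}).

Lemma sdivides_on_trans :
  sdivides_on m1 B1 m2 B2 -> sdivides_on m2 B2 m3 B3 -> sdivides_on m1 B1 m3 B3.
Proof.
case=> C [phi [sCB2 cC hC sB1]] [C' [psi [sC'B3 cC' hC' sB2]]].
exists [set x in C' | psi x \in C], (phi \o psi); split.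
- by apply: subset_trans sC'B3; apply/subsetP=> x; rewrite inE => /andP[].
- move=> x y; rewrite !inE => /andP[xC' px] /andP[yC' py].
  by rewrite cC' //= hC' // cC.
- by move=> x y; rewrite !inE => /andP[xC' px] /andP[yC' py] /=; rewrite hC' // hC.
apply/subsetP=> b /(subsetP sB1) /imsetP[x xC ->].
have /imsetP[x' x'C' ex] := subsetP sB2 x (subsetP sCB2 x xC).
by apply/imsetP; exists x'; rewrite /= ?inE ?x'C' -ex.
Qed.

Lemma sdivides_on_power1 :
  sdivides_on m1 B1 m2 B2 -> sdivides_on m1 B1 (@pmul _ m2 1) (power B2 1).
Proof.
case=> C [phi [sCB2 cC hC sB1]].
exists [set f : {ffun 'I_1 -> U2} | f ord0 \in C],
  (fun f : {ffun 'I_1 -> U2} => phi (f ord0)); split.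
- apply/subsetP=> f; rewrite !inE => fC; apply/forallP=> i.
  by rewrite (ord1 i) (subsetP sCB2).
- by move=> f g; rewrite !inE ffunE; apply: cC.
- by move=> f g; rewrite !inE => fC gC; rewrite ffunE hC.
apply/subsetP=> b /(subsetP sB1) /imsetP[x xC ->].
by apply/imsetP; exists [ffun=> x]; rewrite ?inE ffunE.
Qed.

Lemma sdivides_on_power n :
  sdivides_on m1 B1 m2 B2 ->
  sdivides_on (@pmul _ m1 n) (power B1 n) (@pmul _ m2 n) (power B2 n).
Proof.
case=> C [phi [sCB2 cC hC sB1]].
exists (power C n), (fun f : {ffun 'I_n -> U2} => [ffun i => phi (f i)]); split.
- apply/subsetP=> f; rewrite !inE => /forallP fC; apply/forallP=> i.
  exact: subsetP sCB2 _ (fC i).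
- move=> f g; rewrite !inE => /forallP fC /forallP gC; apply/forallP=> i.
  by rewrite ffunE cC.
- move=> f g; rewrite !inE => /forallP fC /forallP gC; apply/ffunP=> i.
  by rewrite !ffunE hC.
apply/subsetP=> b; rewrite inE => /forallP bB1.
have /fin_all_exists2[x xC bx] : forall i, exists2 x, x \in C & b i = phi x.
  by move=> i; apply/imsetP/(subsetP sB1)/bB1.
apply/imsetP; exists [ffun i => x i].
  by rewrite inE; apply/forallP=> i; rewrite ffunE.
by apply/ffunP=> i; rewrite !ffunE bx.
Qed.

Lemma power_closed n : {in B2 &, forall x y, m2 x y \in B2} ->
  {in power B2 n &, forall f g, pmul m2 f g \in power B2 n}.
Proof.
move=> cB2 f g; rewrite !inE => /forallP fB2 /forallP gB2.
by apply/forallP=> i; rewrite ffunE cB2.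
Qed.

Lemma sdivides_on_flatten n m :
  sdivides_on m1 B1 (@pmul _ (@pmul _ m2 m) n) (power (power B2 m) n) ->
  sdivides_on m1 B1 (@pmul _ m2 (n * m)) (power B2 (n * m)).
Proof.
have card_nm : #|{: 'I_n * 'I_m}| = n * m by rewrite card_prod !card_ord.
pose e p : 'I_(n * m) := cast_ord card_nm (enum_rank p).
pose d k : 'I_n * 'I_m := enum_val (cast_ord (esym card_nm) k).
have de : cancel e d by move=> p; rewrite /d /e cast_ordK enum_rankK.
have ed : cancel d e by move=> k; rewrite /d /e enum_valK cast_ordKV.
pose unflatten (f : {ffun 'I_(n * m) -> U2}) : {ffun 'I_n -> {ffun 'I_m -> U2}} :=
  [ffun i => [ffun j => f (e (i, j))]].
pose flatten (F : {ffun 'I_n -> {ffun 'I_m -> U2}}) : {ffun 'I_(n * m) -> U2} :=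
  [ffun k => F (d k).1 (d k).2].
have flattenK : cancel flatten unflatten.
  by move=> F; apply/ffunP=> i; apply/ffunP=> j; rewrite !ffunE de.
have unflattenM f g : unflatten (pmul m2 f g) =
    pmul (@pmul _ m2 m) (unflatten f) (unflatten g).
  by apply/ffunP=> i; apply/ffunP=> j; rewrite !ffunE.
case=> C [phi [sCB2 cC hC sB1]].
exists [set f | unflatten f \in C], (phi \o unflatten); split.
- apply/subsetP=> f; rewrite !inE => /(subsetP sCB2); rewrite inE => /forallP fB2.
  apply/forallP=> k; rewrite -(ed k); case: (d k) => i j.
  by have := fB2 i; rewrite inE => /forallP/(_ j); rewrite !ffunE.
- by move=> f g; rewrite !inE unflattenM; apply: cC.
- by move=> f g; rewrite !inE => fC gC /=; rewrite unflattenM hC.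
apply/subsetP=> b /(subsetP sB1) /imsetP[F FC ->].
by apply/imsetP; exists (flatten F); rewrite ?inE /= flattenK.
Qed.

End Division.

Lemma in_pv_sdivides_power (W : finType) (mW : W -> W -> W) (U1 U2 : finType)
  (m1 : U1 -> U1 -> U1) (m2 : U2 -> U2 -> U2) (B1 : {set U1}) (B2 : {set U2}) m :
  sdivides_on m1 B1 (@pmul _ m2 m) (power B2 m) ->
  in_pv mW m1 B1 -> in_pv mW m2 B2.
Proof.
move=> B1B2 [n /sdividesE WB1]; exists (n * m); apply/sdividesE.
exact: sdivides_on_trans WB1 (sdivides_on_flatten (sdivides_on_power n B1B2)).
Qed.

Lemma same_pv_sym (U1 U2 : finType) (m1 : U1 -> U1 -> U1) (m2 : U2 -> U2 -> U2)
  (B1 : {set U1}) (B2 : {set U2}) :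
  same_pv m1 B1 m2 B2 -> same_pv m2 B2 m1 B1.
Proof. by move=> eqB W mW mWA; apply: iff_sym; apply: eqB. Qed.

Definition pick_preim (T T' : finType) (E : {set T}) (psi : T -> T') (p : T') :
  option T :=
  [pick y in E | psi y == p].

Section PartialInverse.

Variables (T T' : finType) (E : {set T}) (psi : T -> T').
Hypothesis psi_inj : {in E &, injective psi}.

Lemma pick_preim_Some p y : pick_preim E psi p = Some y -> y \in E /\ psi y = p.
Proof. by rewrite /pick_preim; case: pickP => // z /andP[zE /eqP <-] [<-]. Qed.

Lemma pick_preimK y : y \in E -> pick_preim E psi (psi y) = Some y.
Proof.
move=> yE; rewrite /pick_preim; case: pickP => [z /andP[zE /eqP ez] | /(_ y)].
  by rewrite (psi_inj zE yE ez).
by rewrite yE eqxx.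
Qed.

End PartialInverse.

Definition apply_vec (Y : finType) n (f : {ffun 'I_n -> {ffun Y -> Y}})
  (p : {ffun 'I_n -> Y}) : {ffun 'I_n -> Y} := [ffun i => f i (p i)].

Lemma apply_vec_pmul (Y : finType) n (f g : {ffun 'I_n -> {ffun Y -> Y}}) p :
  apply_vec (pmul (@tmul Y) f g) p = apply_vec g (apply_vec f p).
Proof. by apply/ffunP=> i; rewrite !ffunE. Qed.

Section Covering.

Variables (Y Z : finType) (phi : Z -> option Y).

Definition covers (h : Z -> Z) (f : {ffun Y -> Y}) : bool :=
  [forall z, forall x, (phi z == Some x) ==> (phi (h z) == Some (f x))].

Lemma coversP (h : Z -> Z) (f : {ffun Y -> Y}) :
  reflect (forall z x, phi z = Some x -> phi (h z) = Some (f x)) (covers h f).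
Proof.
apply: (iffP forallP) => [cov z x /eqP ezx | cov z].
  by have /forallP/(_ x) := cov z; rewrite ezx => /eqP.
by apply/forallP=> x; apply/implyP=> /eqP/cov ->.
Qed.

Lemma covers_comp (h1 h2 : Z -> Z) (f1 f2 : {ffun Y -> Y}) :
  covers h1 f1 -> covers h2 f2 -> covers (h2 \o h1) (tmul f1 f2).
Proof.
move=> /coversP c1 /coversP c2; apply/coversP=> z x /c1/c2.
by rewrite ffunE.
Qed.

Variables (U : finType) (mU : U -> U -> U) (app : U -> Z -> Z).
Variables (D : {set Y}) (B1 : {set {ffun Y -> Y}}) (B2 : {set U}).
Hypothesis appM : forall t1 t2, app (mU t1 t2) =1 app t2 \o app t1.
Hypothesis B1_closed : {in B1 &, forall f g, tmul f g \in B1}.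
Hypothesis B2_closed : {in B2 &, forall t1 t2, mU t1 t2 \in B2}.
Hypothesis phi_onto : forall x, x \in D -> exists z, phi z = Some x.
Hypothesis B1_fix : forall f x, f \in B1 -> x \notin D -> f x = x.
Hypothesis B1_covered : forall f, f \in B1 -> exists2 t, t \in B2 & covers (app t) f.

Lemma sdivides_on_covered : sdivides_on (@tmul Y) B1 mU B2.
Proof.
pose C := [set t in B2 | [exists f in B1, covers (app t) f]].
pose Phi t : {ffun Y -> Y} := [ffun x =>
  if [pick z | phi z == Some x] is Some z then odflt x (phi (app t z)) else x].
have PhiE t f : f \in B1 -> covers (app t) f -> Phi t = f.
  move=> fB1 /coversP tf; apply/ffunP=> x; rewrite ffunE.
  case: pickP => [z /eqP/tf -> // | no_z].
  apply/esym/B1_fix => //; apply/negP=> /phi_onto[z ez].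
  by have := no_z z; rewrite ez eqxx.
have covM t1 t2 f1 f2 : covers (app t1) f1 -> covers (app t2) f2 ->
    covers (app (mU t1 t2)) (tmul f1 f2).
  move=> c1 c2; have /coversP c12 := covers_comp c1 c2.
  by apply/coversP=> z x /c12; rewrite appM.
have CP t : t \in C -> t \in B2 /\ exists2 f, f \in B1 & covers (app t) f.
  by rewrite inE => /andP[tB2 /exists_inP[f fB1 tf]]; split; last exists f.
exists C, Phi; split.
- by apply/subsetP=> t; rewrite inE => /andP[].
- move=> t1 t2 /CP[t1B2 [f1 f1B1 c1]] /CP[t2B2 [f2 f2B1 c2]].
  rewrite inE B2_closed //; apply/exists_inP; exists (tmul f1 f2).
    exact: B1_closed.
  exact: covM.
- move=> t1 t2 /CP[_ [f1 f1B1 c1]] /CP[_ [f2 f2B1 c2]].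
  rewrite (PhiE _ _ f1B1 c1) (PhiE _ _ f2B1 c2); apply: PhiE (covM _ _ _ _ c1 c2).
  exact: B1_closed.
apply/subsetP=> f fB1; have [t tB2 tf] := B1_covered fB1.
apply/imsetP; exists t; last by rewrite (PhiE _ _ fB1 tf).
by rewrite inE tB2; apply/exists_inP; exists f.
Qed.

End Covering.

Lemma covers_pick_preim (T T' : finType) (E : {set T}) (psi : T -> T') (h : T' -> T')
  (g : {ffun T -> T}) :
  {in E &, injective psi} ->
  (forall y, y \in E -> g y \in E /\ h (psi y) = psi (g y)) ->
  covers (pick_preim E psi) h g.
Proof.
move=> psi_inj hg; apply/coversP=> p y /pick_preim_Some[yE <-].
by have [gyE ->] := hg y yE; apply: pick_preimK.
Qed.

Section BarTs.

Variables (Y S : finType) (D : {set Y}) (gen : Y -> S -> Y).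

Definition bar_gen s : {ffun Y -> Y} := [ffun y => if y \in D then gen y s else y].
Definition bar_const c : {ffun Y -> Y} := [ffun y => if y \in D then c else y].

Lemma bar_tsP f :
  reflect ((exists s, f = bar_gen s) \/ (exists2 c, c \in D & f = bar_const c))
          (f \in bar_ts D gen).
Proof.
rewrite in_setU; apply: (iffP orP).
  by case=> /imsetP[x xD ->]; [left | right]; exists x.
by case=> [[s ->] | [c cD ->]]; [left | right]; apply: imset_f.
Qed.

Lemma bar_gen_in s : bar_gen s \in bar_ts D gen.
Proof. by apply/bar_tsP; left; exists s. Qed.

Lemma bar_const_in c : c \in D -> bar_const c \in bar_ts D gen.
Proof. by move=> cD; apply/bar_tsP; right; exists c. Qed.

Lemma bar_ts_fix f y : f \in bar_ts D gen -> y \notin D -> f y = y.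
Proof. by case/bar_tsP=> [[s ->] | [c _ ->]] /negbTE yD; rewrite ffunE yD. Qed.

Variable mul : S -> S -> S.
Hypothesis gen_closed : forall y s, y \in D -> gen y s \in D.
Hypothesis gen_mul : forall y s t, y \in D -> gen y (mul s t) = gen (gen y s) t.

Lemma bar_ts_stable f y : f \in bar_ts D gen -> y \in D -> f y \in D.
Proof. by case/bar_tsP=> [[s ->] | [c cD ->]] yD; rewrite ffunE yD ?gen_closed. Qed.

Lemma bar_ts_closed : {in bar_ts D gen &, forall f g, tmul f g \in bar_ts D gen}.
Proof.
move=> f g fB /bar_tsP[[t ->] | [d dD ->]]; last first.
  have -> : tmul f (bar_const d) = bar_const d.
    apply/ffunP=> y; rewrite !ffunE; case: (boolP (y \in D)) => yD.
      by rewrite (bar_ts_stable fB yD).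
    by rewrite (bar_ts_fix fB yD) (negbTE yD).
  exact: bar_const_in.
case/bar_tsP: fB => [[s ->] | [c cD ->]].
  have -> : tmul (bar_gen s) (bar_gen t) = bar_gen (mul s t).
    apply/ffunP=> y; rewrite !ffunE.
    by case: (boolP (y \in D)) => yD; rewrite ?gen_closed ?gen_mul ?(negbTE yD).
  exact: bar_gen_in.
have -> : tmul (bar_const c) (bar_gen t) = bar_const (gen c t).
  apply/ffunP=> y; rewrite !ffunE.
  by case: (boolP (y \in D)) => yD; rewrite ?cD ?(negbTE yD).
exact/bar_const_in/gen_closed.
Qed.

End BarTs.

Section SBar.

Variables (S : finType) (mul : S -> S -> S).
Hypothesis mulA : associative mul.

Lemma Some_in_Sdot s : Some s \in Sdot mul.
Proof. by rewrite /Sdot; case: ifP => _; rewrite ?in_setT ?imset_f. Qed.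

Lemma rmul_dot_mul y s t :
  rmul_dot mul y (mul s t) = rmul_dot mul (rmul_dot mul y s) t.
Proof. by case: y => [z|]; rewrite /rmul_dot ?mulA. Qed.

Lemma S_bar_closed : {in S_bar mul &, forall f g, tmul f g \in S_bar mul}.
Proof.
apply: (bar_ts_closed (mul := mul)) => [y s _ | y s t _]; last exact: rmul_dot_mul.
exact: Some_in_Sdot.
Qed.

Variables (Y : finType) (D : {set Y}) (gen : Y -> S -> Y).
Hypothesis gen_closed : forall y s, y \in D -> gen y s \in D.
Hypothesis gen_mul : forall y s t, y \in D -> gen y (mul s t) = gen (gen y s) t.

Lemma bar_ts_sdivides_S_bar (phi : option S -> option Y) :
  (forall y x, phi y = Some x -> y \in Sdot mul /\ x \in D) ->
  (forall x, x \in D -> exists y, phi y = Some x) ->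
  (forall s, exists t, forall y x, phi y = Some x ->
     phi (rmul_dot mul y t) = Some (gen x s)) ->
  sdivides_on (@tmul Y) (bar_ts D gen) (@tmul _) (S_bar mul).
Proof.
move=> phi_dom phi_onto phi_step.
apply: (@sdivides_on_covered Y _ phi _ (@tmul _) (fun t y => t y) D).
- by move=> t1 t2 y; rewrite ffunE.
- exact: bar_ts_closed gen_closed gen_mul.
- exact: S_bar_closed.
- exact: phi_onto.
- exact: bar_ts_fix.
move=> f /bar_tsP[[s ->] | [c cD ->]].
  have [t phi_t] := phi_step s.
  exists (bar_gen (Sdot mul) (rmul_dot mul) t); first exact: bar_gen_in.
  apply/coversP=> y x e; have [yS xD] := phi_dom _ _ e.
  by rewrite !ffunE yS xD (phi_t _ _ e).
have [y0 e0] := phi_onto c cD.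
exists (bar_const (Sdot mul) y0); first by apply: bar_const_in; case: (phi_dom _ _ e0).
apply/coversP=> y x e; have [yS xD] := phi_dom _ _ e.
by rewrite !ffunE yS xD e0.
Qed.

Hypothesis gen_faithful :
  forall s t, (forall y, y \in D -> gen y s = gen y t) -> s = t.

Definition act_dot x (y : option S) : Y := if y is Some s then gen x s else x.

Definition act_vec (y : option S) : {ffun 'I_#|D| -> Y} :=
  [ffun i => act_dot (enum_val i) y].

Lemma act_dot_in x y : x \in D -> act_dot x y \in D.
Proof. by case: y => [s|] //= /gen_closed. Qed.

Lemma act_dot_rmul x y s :
  x \in D -> act_dot x (rmul_dot mul y s) = gen (act_dot x y) s.
Proof. by case: y => [t|] //= /gen_mul. Qed.

Lemma trivial_act_is_monoid s : (forall x, x \in D -> gen x s = x) -> is_monoid mul.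
Proof.
move=> s_id; apply/existsP; exists s; apply/forallP=> t.
by apply/andP; split; apply/eqP/gen_faithful=> x xD; rewrite gen_mul ?s_id ?gen_closed.
Qed.

(* The adjoined identity [None] lies in S^bullet only when S is not a monoid,
   hence only when no element of S acts trivially on D. *)
Lemma act_vec_inj : {in Sdot mul &, injective act_vec}.
Proof.
have act_vecP y z :
    act_vec y = act_vec z -> forall x, x \in D -> act_dot x y = act_dot x z.
  move=> /ffunP e x xD; have := e (enum_rank_in xD x).
  by rewrite !ffunE enum_rankK_in.
have None_notin s : (forall x, x \in D -> gen x s = x) -> None \notin Sdot mul.
  by move/trivial_act_is_monoid; rewrite /Sdot => ->; apply/imsetP=> -[].
move=> [s|] [t|] yS zS /act_vecP e.
- by congr Some; apply: gen_faithful.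
- by rewrite (negbTE (None_notin s e)) in zS.
- by rewrite (negbTE (None_notin t (fun x xD => esym (e x xD)))) in yS.
- by [].
Qed.

Lemma S_bar_sdivides_power :
  sdivides_on (@tmul _) (S_bar mul) (@pmul _ (@tmul Y) #|D|) (power (bar_ts D gen) #|D|).
Proof.
have enumD (i : 'I_#|D|) : enum_val i \in D by apply: enum_valP.
have act_vec_gen s y :
    apply_vec [ffun=> bar_gen D gen s] (act_vec y) = act_vec (rmul_dot mul y s).
  by apply/ffunP=> i; rewrite !ffunE act_dot_in ?act_dot_rmul.
have act_vec_const c y :
    apply_vec [ffun i => bar_const D (act_vec c i)] (act_vec y) = act_vec c.
  by apply/ffunP=> i; rewrite !ffunE act_dot_in.
apply: (@sdivides_on_covered _ _ (pick_preim (Sdot mul) act_vec) _ (@pmul _ (@tmul Y) _)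
          (@apply_vec Y _) (Sdot mul)).
- exact: apply_vec_pmul.
- exact: S_bar_closed.
- exact/power_closed/(bar_ts_closed gen_closed gen_mul).
- by move=> y yS; exists (act_vec y); apply: pick_preimK act_vec_inj _ yS.
- exact: bar_ts_fix.
move=> f /bar_tsP[[s ->] | [c cS ->]].
  exists [ffun=> bar_gen D gen s].
    by rewrite inE; apply/forallP=> i; rewrite ffunE bar_gen_in.
  apply: covers_pick_preim act_vec_inj _ => y yS.
  by rewrite ffunE yS Some_in_Sdot act_vec_gen.
exists [ffun i => bar_const D (act_vec c i)].
  by rewrite inE; apply/forallP=> i; rewrite ffunE bar_const_in // ffunE act_dot_in.
by apply: covers_pick_preim act_vec_inj _ => y yS; rewrite ffunE yS cS act_vec_const.
Qed.

Lemma same_pv_bar_ts_S_bar (phi : option S -> option Y) :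
  (forall y x, phi y = Some x -> y \in Sdot mul /\ x \in D) ->
  (forall x, x \in D -> exists y, phi y = Some x) ->
  (forall s, exists t, forall y x, phi y = Some x ->
     phi (rmul_dot mul y t) = Some (gen x s)) ->
  same_pv (@tmul Y) (bar_ts D gen) (@tmul _) (S_bar mul).
Proof.
move=> phi_dom phi_onto phi_step W mW _; split; apply: in_pv_sdivides_power.
  exact/sdivides_on_power1/(bar_ts_sdivides_S_bar phi_dom phi_onto phi_step).
exact: S_bar_sdivides_power.
Qed.

End SBar.

Theorem corollary2p3 :
  (forall (S X : finType) (mul : S -> S -> S) (act : X -> S -> X),
     associative mul -> right_action mul act -> faithful_act act ->
     divides_dot mul act ->
     same_pv (@tmul X) (bar_ts [set: X] act)
             (@tmul _) (S_bar mul))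
  /\
  (forall (S : finType) (mul : S -> S -> S) (J : {set S}),
     associative mul ->
     (forall x s, x \in J -> mul x s \in J) ->
     (forall s t, (forall x, x \in J -> mul x s = mul x t) -> s = t) ->
     same_pv (@tmul _) (S_bar mul) (@tmul S) (bar_ts J mul)).
Proof.
split=> [S X mul act mulA actM act_faithful [phi [phi_dom phi_onto phi_step]] |
         S mul J mulA J_closed J_faithful].
  apply: (@same_pv_bar_ts_S_bar _ _ mulA _ [set: X] act _ _ _ phi).
  - by move=> y s _; rewrite in_setT.
  - by move=> y s t _; apply: actM.
  - by move=> s t st; apply: act_faithful => x; apply: st; rewrite in_setT.
  - by move=> y x e; rewrite in_setT (phi_dom _ _ e).
  - by move=> x _; have [y _ e] := phi_onto x; exists y.
  - exact: phi_step.
pose phi y := if y is Some s then (if s \in J then Some s else None) else None.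
apply/same_pv_sym/(@same_pv_bar_ts_S_bar _ _ mulA _ J mul J_closed _ J_faithful phi).
- by move=> y s t _; rewrite mulA.
- by move=> [s|] x //=; case: ifP => // sJ [<-]; rewrite Some_in_Sdot.
- by move=> x xJ; exists (Some x); rewrite /= xJ.
- by move=> s; exists s => -[z|] x //=; case: ifP => // zJ [<-]; rewrite J_closed.
Qed.
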